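(* Let $(X,\rho)$ be a metric space, $A\in CL(X)$ and $(A_k)\subset CL(X)$. If $f\colon[0,\infty)\to[0,\infty)$ is a modulus such that $\beta:=\lim_{t\to\infty}\frac{f(t)}{t}>0$ and $(A_k)$ is Wijsman strongly Cesàro summable to $A$ with respect to $f$, then $(A_k)$ is Wijsman strongly Cesàro summable to $A$.
   Context: A modulus is a function $f\colon[0,\infty)\to[0,\infty)$ such that $f(x)=0$ iff $x=0$, $f$ is subadditive, increasing and continuous (for such $f$ the limit $\lim_{t\to\infty}f(t)/t$ exists and is finite). $CL(X)$ denotes the set of all non-empty closed subsets of $(X,\rho)$, and $d(x,B)=\inf_{y\in B}\rho(x,y)$. $(A_k)$ is Wijsman strongly Cesàro summable to $A$ if $\lim_{n\to\infty}\frac1n\sum_{k=1}^n|d(x,A_k)-d(x,A)|=0$ for every $x\in X$; it is Wijsman strongly Cesàro summable to $A$ with respect to $f$ if $\lim_{n\to\infty}\frac1n\sum_{k=1}^n f(|d(x,A_k)-d(x,A)|)=0$ for every $x\in X$. *)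

From HB Require Import structures.
From mathcomp Require Import all_boot all_order all_algebra.
From mathcomp Require Import all_classical all_reals all_analysis.
Set Implicit Arguments. Unset Strict Implicit. Unset Printing Implicit Defensive.
Import Order.TTheory GRing.Theory Num.Theory.
Import numFieldNormedType.Exports.
Local Open Scope classical_set_scope.
Local Open Scope ring_scope.

Definition is_metric (R : realType) (X : Type) (rho : X -> X -> R) : Prop :=
  [/\ (forall x y, 0 <= rho x y),
      (forall x y, rho x y = 0 <-> x = y),
      (forall x y, rho x y = rho y x) &
      (forall x y z, rho x z <= rho x y + rho y z)].

Definition metric_closed (R : realType) (X : Type) (rho : X -> X -> R)
  (B : set X) : Prop :=
  forall x, (forall e : R, 0 < e -> exists2 y, B y & rho x y < e) -> B x.

Definition CL (R : realType) (X : Type) (rho : X -> X -> R) (B : set X) : Prop :=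
  B !=set0 /\ metric_closed rho B.

Definition dist_set (R : realType) (X : Type) (rho : X -> X -> R)
  (x : X) (B : set X) : R :=
  inf [set rho x y | y in B].

(* f : [0,oo) -> [0,oo) is a modulus (f given on R, only its values on [0,oo)
   matter). "Increasing" read as non-decreasing. *)
Definition modulus (R : realType) (f : R -> R) : Prop :=
  [/\ (forall x, 0 <= x -> 0 <= f x),
      (forall x, 0 <= x -> (f x = 0 <-> x = 0)),
      (forall x y, 0 <= x -> 0 <= y -> f (x + y) <= f x + f y),
      (forall x y, 0 <= x -> x <= y -> f x <= f y) &
      {within `[0, +oo[, continuous f}].

Definition wijsman_strong_cesaro_f (R : realType) (X : Type) (rho : X -> X -> R)
  (f : R -> R) (Ak : nat -> set X) (A : set X) : Prop :=
  forall x : X,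
    (fun n : nat => n%:R^-1 *
       \sum_(1 <= k < n.+1) f `|dist_set rho x (Ak k) - dist_set rho x A|)
      @ \oo --> (0 : R).

Definition wijsman_strong_cesaro (R : realType) (X : Type) (rho : X -> X -> R)
  (Ak : nat -> set X) (A : set X) : Prop :=
  forall x : X,
    (fun n : nat => n%:R^-1 *
       \sum_(1 <= k < n.+1) `|dist_set rho x (Ak k) - dist_set rho x A|)
      @ \oo --> (0 : R).

From HB Require Import structures.
From mathcomp Require Import all_boot all_order all_algebra.
From mathcomp Require Import all_classical all_reals all_analysis.
Import Order.TTheory GRing.Theory Num.Theory.
Import numFieldNormedType.Exports.
Local Open Scope classical_set_scope.
Local Open Scope ring_scope.

(* Subadditivity gives f (n s) <= n f s, so f (n s) / (n s) <= f s / s and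
   hence beta s <= f s for s >= 0.  Therefore |d(x,A_k) - d(x,A)| <=
   f |d(x,A_k) - d(x,A)| / beta term by term, and the Cesaro means are
   squeezed to 0. *)

Lemma lim_dvg (R : realType) (F : set_system R) : ~ cvg F -> lim F = 0.
Proof.
move=> dvgF; rewrite /lim /lim_in; case: xgetP => // l _ Fl.
by exfalso; apply: dvgF; apply/cvg_ex; exists l.
Qed.

Section Subadditive.
Variables (R : realType) (f : R -> R).
Hypothesis f0 : f 0 = 0.
Hypothesis f_subadd : forall x y, 0 <= x -> 0 <= y -> f (x + y) <= f x + f y.

Lemma subadd_mulrn_le (s : R) (n : nat) : 0 <= s -> f (n%:R * s) <= n%:R * f s.
Proof.
move=> s0; elim: n => [|n IH]; first by rewrite !mul0r f0.
rewrite -addn1 !natrD !mulrDl !mul1r.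
apply: (le_trans (f_subadd _ _ _ s0)); first by rewrite mulr_ge0.
by rewrite lerD2r.
Qed.

Hypothesis f_ge0 : forall x, 0 <= x -> 0 <= f x.

Lemma lim_slope_mulr_le (s : R) :
  0 <= s -> lim ((fun t => f t / t) @ +oo) * s <= f s.
Proof.
set b := lim _; rewrite le0r => /orP[/eqP->|s_gt0]; first by rewrite mulr0 f0.
have [cvg_slope|/lim_dvg b0] := pselect (cvg ((fun t => f t / t) @ +oo)); last first.
  by rewrite /b b0 mul0r f_ge0 // ltW.
rewrite -ler_pdivlMr // leNgt; apply/negP => slope_lt_b.
have [M [_ slope_gtM]] := cvgr_gt _ cvg_slope _ slope_lt_b.
pose n := (Num.bound (`|M| / s)).+1.
have n_gt0 : (0 : R) < n%:R by rewrite ltr0n.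
have M_lt_ns : M < n%:R * s.
  rewrite (le_lt_trans (ler_norm M)) // -ltr_pdivrMr //.
  apply: lt_le_trans (archi_boundP _) _; first by rewrite divr_ge0 // ltW.
  by rewrite ler_nat.
move: (slope_gtM _ M_lt_ns) => /=; apply/negP; rewrite -leNgt.
rewrite ler_pdivrMr ?mulr_gt0 // mulrCA divfK ?gt_eqF //.
exact: subadd_mulrn_le n (ltW s_gt0).
Qed.

End Subadditive.

Definition cesaro_mean {R : realType} (u : nat -> R) (n : nat) : R :=
  n%:R^-1 * \sum_(1 <= k < n.+1) u k.

Lemma cesaro_mean_cvg0_le (R : realType) (c : R) (u v : nat -> R) :
  0 < c -> (forall k, 0 <= u k) -> (forall k, c * u k <= v k) ->
  cesaro_mean v @ \oo --> 0 -> cesaro_mean u @ \oo --> 0.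
Proof.
move=> c_gt0 u_ge0 cu_le_v v_cvg0.
apply: (@squeeze_cvgr _ _ _ _ (fun=> 0) (fun n => c^-1 * cesaro_mean v n)).
- near=> n; apply/andP; split.
    by rewrite mulr_ge0 ?invr_ge0 ?ler0n ?sumr_ge0.
  rewrite /cesaro_mean mulrCA ler_wpM2l ?invr_ge0 ?ler0n // mulr_sumr.
  by apply: ler_sum => k _; rewrite ler_pdivlMl.
- exact: cvg_cst.
- by rewrite -(mulr0 c^-1); apply: cvgM => //; exact: cvg_cst.
Unshelve. all: by end_near.
Qed.

Theorem theorem4p6 (R : realType) (X : Type) (rho : X -> X -> R)
  (A : set X) (Ak : nat -> set X) (f : R -> R) :
  is_metric rho ->
  CL rho A ->
  (forall k, CL rho (Ak k)) ->
  modulus f ->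
  0 < lim ((fun t => f t / t) @ +oo) ->
  wijsman_strong_cesaro_f rho f Ak A ->
  wijsman_strong_cesaro rho Ak A.
Proof.
move=> _ _ _ [f_ge0 f_eq0 f_subadd _ _] beta_gt0 cesaro_f x.
have f0 : f 0 = 0 by apply/f_eq0.
pose d k := `|dist_set rho x (Ak k) - dist_set rho x A|.
have d_ge0 k : 0 <= d k by exact: normr_ge0.
have beta_d_le k : lim ((fun t => f t / t) @ +oo) * d k <= f (d k).
  exact: lim_slope_mulr_le.
exact: (@cesaro_mean_cvg0_le _ _ d (f \o d) beta_gt0 d_ge0 beta_d_le (cesaro_f x)).
Qed.
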